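(* Let $A$ be an associative commutative algebra with unit over a field $K$ of characteristic different from $2$ and $3$, let $\partial\in\operatorname{Der}(A)$, and suppose that $a\partial\ne0$ for every nonzero $a\in A$. Let $A\partial=\{a\partial : a\in A\}$, a Lie algebra of derivations with $[a\partial,b\partial]=(a\partial(b)-b\partial(a))\partial$. For $\chi\in A^*$ define $\Phi(\chi):A\partial\times A\partial\to K$ by $\Phi(\chi)(a\partial,b\partial)=\chi(ab)$. Then each $\Phi(\chi)$ is a commutative $2$-cocycle on $A\partial$, and $\chi\mapsto\Phi(\chi)$ is an injective linear map $A^*\to Z^2_{comm}(A\partial)$.
   Context: $Z^2_{comm}(L)$ is the space of symmetric bilinear forms $\varphi:L\times L\to K$ with $\varphi([x,y],z)+\varphi([z,x],y)+\varphi([y,z],x)=0$ for all $x,y,z\in L$. *)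

From HB Require Import structures.
From mathcomp Require Import all_boot all_order all_algebra.
From Stdlib Require Import ClassicalEpsilon.
Set Implicit Arguments. Unset Strict Implicit. Unset Printing Implicit Defensive.
Import GRing.Theory.
Local Open Scope ring_scope.

Definition lin_fun (K : fieldType) (A : lmodType K) (f : A -> A) : Prop :=
  forall (c : K) (u v : A), f (c *: u + v) = c *: f u + f v.

Definition lin_form (K : fieldType) (A : lmodType K) (chi : A -> K) : Prop :=
  forall (c : K) (u v : A), chi (c *: u + v) = c * chi u + chi v.

Definition is_derivation (K : fieldType) (A : comAlgType K) (d : A -> A) : Prop :=
  lin_fun d /\ forall a b : A, d (a * b) = a * d b + d a * b.

Definition mulder (K : fieldType) (A : comAlgType K) (d : A -> A) (a : A) : A -> A :=
  fun x => a * d x.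

Definition inAd (K : fieldType) (A : comAlgType K) (d : A -> A) (D : A -> A) : Prop :=
  exists a : A, D = mulder d a.

Definition opbr (K : fieldType) (A : comAlgType K) (D1 D2 : A -> A) : A -> A :=
  fun x => D1 (D2 x) - D2 (D1 x).

Definition opadd (K : fieldType) (A : comAlgType K) (D1 D2 : A -> A) : A -> A :=
  fun x => D1 x + D2 x.
Definition opscale (K : fieldType) (A : comAlgType K) (c : K) (D : A -> A) : A -> A :=
  fun x => c *: D x.

Definition Z2comm (K : fieldType) (A : comAlgType K) (d : A -> A)
    (phi : (A -> A) -> (A -> A) -> K) : Prop :=
  (forall x y, inAd d x -> inAd d y -> phi x y = phi y x) /\
  (forall (c : K) x y z, inAd d x -> inAd d y -> inAd d z ->
      phi (opadd (opscale c x) y) z = c * phi x z + phi y z) /\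
  (forall (c : K) x y z, inAd d x -> inAd d y -> inAd d z ->
      phi z (opadd (opscale c x) y) = c * phi z x + phi z y) /\
  (forall x y z, inAd d x -> inAd d y -> inAd d z ->
      phi (opbr x y) z + phi (opbr z x) y + phi (opbr y z) x = 0).

(* The coefficient a of an element D = a∂ of A∂ (well defined when a |-> a∂ is injective). *)
Definition coefAd (K : fieldType) (A : comAlgType K) (d : A -> A) (D : A -> A) : A :=
  epsilon (inhabits (0 : A)) (fun a : A => D = mulder d a).

Definition Phi (K : fieldType) (A : comAlgType K) (d : A -> A) (chi : A -> K)
    (D1 D2 : A -> A) : K :=
  chi (coefAd d D1 * coefAd d D2).

From HB Require Import structures.
From mathcomp Require Import all_boot all_order all_algebra.
From Stdlib Require Import ClassicalEpsilon FunctionalExtensionality.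
From mathcomp Require Import ring.
Import GRing.Theory.
Local Open Scope ring_scope.

(* Since a |-> a∂ is injective, Φ(χ)(a∂, b∂) = χ(ab) is well defined.  The
   bracket [a∂, b∂] = (a∂b - b∂a)∂ turns the cocycle identity into
   χ applied to (a∂b - b∂a)e + (e∂a - a∂e)b + (b∂e - e∂b)a, which vanishes
   identically in a commutative ring; bilinearity and symmetry come from those
   of the product.  Evaluating at b = 1 recovers χ from Φ(χ). *)

Section LinearForms.

Context {K : fieldType} {A : lmodType K} {chi : A -> K}.
Hypothesis chi_lin : lin_form chi.

Lemma lin_formD (u v : A) : chi (u + v) = chi u + chi v.
Proof. by rewrite -[u in LHS]scale1r chi_lin mul1r. Qed.

Lemma lin_form0 : chi 0 = 0.
Proof.
have chi00 := lin_formD 0 0; rewrite addr0 in chi00.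
by apply: (@addrI _ (chi 0)); rewrite addr0 -chi00.
Qed.

End LinearForms.

Section MulDerivations.

Variables (K : fieldType) (A : comAlgType K) (d : A -> A).

Lemma opadd_scale_mulder (c : K) (a b : A) :
  opadd (opscale c (mulder d a)) (mulder d b) = mulder d (c *: a + b).
Proof.
apply: functional_extensionality => x.
by rewrite /opadd /opscale /mulder mulrDl scalerAl.
Qed.

Hypothesis d_Leibniz : forall u v : A, d (u * v) = u * d v + d u * v.

Lemma opbr_mulder (a b : A) :
  opbr (mulder d a) (mulder d b) = mulder d (a * d b - b * d a).
Proof.
apply: functional_extensionality => x.
by rewrite /opbr /mulder !d_Leibniz; ring.
Qed.

Hypothesis mulder_neq0 : forall a : A, a != 0 -> mulder d a <> (fun _ => 0).

Lemma mulder_inj : injective (mulder d).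
Proof.
move=> a b eq_ab; apply/eqP; rewrite -subr_eq0; apply/negPn/negP => /mulder_neq0.
apply; apply: functional_extensionality => x.
by rewrite /mulder mulrBl -/(mulder d a x) eq_ab subrr.
Qed.

Lemma coefAd_mulder (a : A) : coefAd d (mulder d a) = a.
Proof.
have := epsilon_spec (inhabits (0 : A)) (fun b => mulder d a = mulder d b)
  (ex_intro _ a erefl).
by move/mulder_inj.
Qed.

Lemma Phi_mulder (chi : A -> K) (a b : A) :
  Phi d chi (mulder d a) (mulder d b) = chi (a * b).
Proof. by rewrite /Phi !coefAd_mulder. Qed.

Lemma Phi_Z2comm (chi : A -> K) : lin_form chi -> Z2comm d (Phi d chi).
Proof.
move=> chi_lin; split; last split; last split.
- by move=> x y [a ->] [b ->]; rewrite !Phi_mulder mulrC.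
- move=> c x y z [a ->] [b ->] [e ->].
  by rewrite opadd_scale_mulder !Phi_mulder mulrDl -scalerAl chi_lin.
- move=> c x y z [a ->] [b ->] [e ->].
  by rewrite opadd_scale_mulder !Phi_mulder mulrDr -scalerAr chi_lin.
- move=> x y z [a ->] [b ->] [e ->].
  rewrite !opbr_mulder !Phi_mulder -!(lin_formD chi_lin).
  have -> : (a * d b - b * d a) * e + (e * d a - a * d e) * b
            + (b * d e - e * d b) * a = 0 by ring.
  exact: lin_form0.
Qed.

Lemma Phi_inj (chi1 chi2 : A -> K) :
  (forall x y, inAd d x -> inAd d y -> Phi d chi1 x y = Phi d chi2 x y) ->
  chi1 = chi2.
Proof.
move=> eq_Phi; apply: functional_extensionality => u.
have := eq_Phi (mulder d u) (mulder d 1) (ex_intro _ u erefl) (ex_intro _ 1 erefl).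
by rewrite !Phi_mulder mulr1.
Qed.

End MulDerivations.

Theorem lemma2p4 (K : fieldType) (A : comAlgType K) (d : A -> A) :
  (2 \notin [pchar K])%N -> (3 \notin [pchar K])%N ->
  is_derivation d ->
  (forall a : A, a != 0 -> mulder d a <> (fun _ => 0)) ->
  (* Φ(χ) is given on generators by χ(ab) *)
  (forall chi : A -> K, forall a b : A,
      Phi d chi (mulder d a) (mulder d b) = chi (a * b)) /\
  (* each Φ(χ) lies in Z^2_comm(A∂) *)
  (forall chi : A -> K, lin_form chi -> Z2comm d (Phi d chi)) /\
  (* χ |-> Φ(χ) is linear *)
  (forall (c : K) (chi1 chi2 : A -> K), lin_form chi1 -> lin_form chi2 ->
     forall x y, inAd d x -> inAd d y ->
       Phi d (fun u => c * chi1 u + chi2 u) x y = c * Phi d chi1 x y + Phi d chi2 x y) /\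
  (* χ |-> Φ(χ) is injective *)
  (forall chi1 chi2 : A -> K, lin_form chi1 -> lin_form chi2 ->
     (forall x y, inAd d x -> inAd d y -> Phi d chi1 x y = Phi d chi2 x y) ->
     chi1 = chi2).
Proof.
move=> _ _ [_ d_Leibniz] mulder_neq0.
split; first exact: Phi_mulder.
split; first exact: Phi_Z2comm.
split; first by [].
by move=> chi1 chi2 _ _; apply: Phi_inj.
Qed.
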